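(* Let $\Delta>1$, $D\le n$, integers $e_0,e_1\ge0$, and let $M\in\mathbb{F}_2^{m\times n}$ satisfy: for all $S_1,S_2\subseteq[n]$ with $|S_2|\le|S_1|\le D$, if $|S_1|/|S_2|>\Delta^2$ then $(M\odot\mathbf{v}(S_1),M\odot\mathbf{v}(S_2))$ are $(e_0+e_1,e_0+e_1)$-far. Let $G=(V,\mathcal{E})$ be the undirected graph with $V=\{A\subseteq[n]:|A|\le D\}$ and $(A,B)\in\mathcal{E}$ iff $(M\odot\mathbf{v}(A),M\odot\mathbf{v}(B))$ are $(e_0+e_1,e_0+e_1)$-close. Then for $A,B\in V$: (i) if $(A,B)\in\mathcal{E}$ and $|A\cup B|\le D$, then $(A\cup B,A)\in\mathcal{E}$ and $(A\cup B,B)\in\mathcal{E}$; (ii) if $\frac{|A|}{|B|}\notin\left[\frac{1}{\Delta^2},\Delta^2\right]$, then $(A,B)\notin\mathcal{E}$.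
   Context: Group testing model: $(M\odot\mathbf{x})_i=\bigvee_{j:M_{ij}=1}\mathbf{x}_j$. $[n]=\{1,\dots,n\}$; for $S\subseteq[n]$, $\mathbf{v}(S)$ is the binary vector with support $S$. For $\mathbf{x},\mathbf{y}\in\mathbb{F}_2^m$, $(\mathbf{x},\mathbf{y})$ is $(a,b)$-far iff $|\mathrm{supp}(\mathbf{y})\setminus\mathrm{supp}(\mathbf{x})|>a$ or $|\mathrm{supp}(\mathbf{x})\setminus\mathrm{supp}(\mathbf{y})|>b$, and $(a,b)$-close otherwise. *)

From mathcomp Require Import all_boot all_order all_algebra.
From mathcomp Require Import reals.
Set Implicit Arguments. Unset Strict Implicit. Unset Printing Implicit Defensive.

(* Group testing over F_2 represented by boolean entries (true = 1).
   A binary vector of length k is identified with its support {set 'I_k}. *)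

Definition vec (n : nat) (S : {set 'I_n}) : 'I_n -> bool := fun j => j \in S.

Definition gt_mul (m n : nat) (M : 'M[bool]_(m, n)) (x : 'I_n -> bool) : 'I_m -> bool :=
  fun i => [exists j, M i j && x j].

Definition supp (k : nat) (x : 'I_k -> bool) : {set 'I_k} := [set i | x i].

Definition far (k : nat) (a b : nat) (x y : 'I_k -> bool) : bool :=
  (a < #|supp y :\: supp x|) || (b < #|supp x :\: supp y|).

Definition close (k : nat) (a b : nat) (x y : 'I_k -> bool) : bool := ~~ far a b x y.

Definition edge (m n : nat) (M : 'M[bool]_(m, n)) (e0 e1 : nat) (A B : {set 'I_n}) : bool :=
  close (e0 + e1) (e0 + e1) (gt_mul M (vec A)) (gt_mul M (vec B)).

From mathcomp Require Import all_boot all_order all_algebra.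
From mathcomp Require Import reals.
Import Order.TTheory GRing.Theory Num.Theory.
Set Implicit Arguments. Unset Strict Implicit. Unset Printing Implicit Defensive.
Local Open Scope ring_scope.

(* (i) Group testing is monotone and OR-linear: the outcome of A ∪ B is the
   union of the outcomes of A and B, so it differs from the outcome of A only
   by the outcomes of B missing from A, which closeness of A and B bounds.
   (ii) A ratio outside [1/Δ², Δ²] puts the larger set first in the separation
   hypothesis, and closeness is symmetric. *)

Lemma supp_gt_mulU (m n : nat) (M : 'M[bool]_(m, n)) (A B : {set 'I_n}) :
  supp (gt_mul M (vec (A :|: B))) =
  supp (gt_mul M (vec A)) :|: supp (gt_mul M (vec B)).
Proof.
apply/setP => i; rewrite !inE /gt_mul /vec.
apply/existsP/orP => [[j /andP [Mij]] | [] /existsP [j /andP [Mij Xj]]].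
- by rewrite inE => /orP [Aj | Bj]; [left | right];
    apply/existsP; exists j; rewrite Mij.
- by exists j; rewrite Mij inE Xj.
- by exists j; rewrite Mij inE Xj orbT.
Qed.

Lemma farC (k a : nat) (x y : 'I_k -> bool) : far a a x y = far a a y x.
Proof. by rewrite /far orbC. Qed.

Lemma close_supp_setU (k a : nat) (x y z : 'I_k -> bool) :
  supp z = supp x :|: supp y -> close a a x y ->
  close a a z x /\ close a a z y.
Proof.
rewrite /close /far => -> /norP [/negbTE YDX /negbTE XDY].
by rewrite !setDUl !setDUr !setDv set0U setU0 set0I setI0 cards0 YDX XDY.
Qed.

Lemma edgeC (m n e0 e1 : nat) (M : 'M[bool]_(m, n)) (A B : {set 'I_n}) :
  edge M e0 e1 A B = edge M e0 e1 B A.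
Proof. by rewrite /edge /close farC. Qed.

Lemma ltn_of_scaled_ltr (R : numDomainType) (c : R) (a b : nat) :
  1 <= c -> c * b%:R < a%:R -> (b < a)%N.
Proof.
move=> c_ge1 lt_cb_a; rewrite -(ltr_nat R).
by apply: le_lt_trans lt_cb_a; rewrite ler_peMl.
Qed.

Theorem lemma2 (R : realType) (Delta : R) (m n D e0 e1 : nat)
  (M : 'M[bool]_(m, n)) :
  1 < Delta -> (D <= n)%N ->
  (forall S1 S2 : {set 'I_n}, (#|S2| <= #|S1|)%N -> (#|S1| <= D)%N ->
     (#|S1|%:R > Delta ^+ 2 * #|S2|%:R :> R) ->
     far (e0 + e1) (e0 + e1) (gt_mul M (vec S1)) (gt_mul M (vec S2))) ->
  forall A B : {set 'I_n}, (#|A| <= D)%N -> (#|B| <= D)%N ->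
    (edge M e0 e1 A B -> (#|A :|: B| <= D)%N ->
       edge M e0 e1 (A :|: B) A /\ edge M e0 e1 (A :|: B) B) /\
    ((#|A|%:R > Delta ^+ 2 * #|B|%:R :> R) \/ (#|B|%:R > Delta ^+ 2 * #|A|%:R :> R) ->
       ~~ edge M e0 e1 A B).
Proof.
move=> Delta_gt1 _ separated A B A_le_D B_le_D.
have Delta2_ge1 : 1 <= Delta ^+ 2 by rewrite exprn_ege1 ?ltW.
have not_edge (S1 S2 : {set 'I_n}) : (#|S1| <= D)%N ->
    Delta ^+ 2 * #|S2|%:R < #|S1|%:R -> ~~ edge M e0 e1 S1 S2.
  move=> S1_le_D ratio; rewrite /edge /close negbK.
  by apply: separated => //; rewrite ltnW // (ltn_of_scaled_ltr Delta2_ge1 ratio).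
split=> [AB _ | [ratio | ratio]].
- exact/close_supp_setU/AB/supp_gt_mulU.
- exact: not_edge.
- by rewrite edgeC; apply: not_edge.
Qed.
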